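(* Let $n\geq 2$. Let $S$ be the semigroup with zero $0$ defined by the presentation with generators $x,y,z$ and defining relations $$xyz=x,\quad yzy=y,\quad zyz=z,$$ together with $w=0$ for each $w\in\{x^n,\ y^2,\ z^2,\ xz,\ yx,\ zx^{n-1}\}$, and let $A=S^1\{x,y\}$. Then $S$ is finite, $\mathrm{H}_{\mathcal{R}}(S)=n$ and $\mathrm{H}_{\mathcal{R}}(A)=2n-1$.
   Context: A presentation of a semigroup with zero $\langle X\mid R\rangle$ defines the quotient of the free semigroup with zero on $X$ by the congruence generated by $R$. $S^1$ denotes $S$ with an identity adjoined; $A=S^1\{x,y\}$ is the left ideal generated by $x,y$. Green's preorder: $a\leq_{\mathcal{R}} b$ iff $aS^1\subseteq bS^1$; $\mathcal{R}$ is the associated equivalence; the $\mathcal{R}$-height $\mathrm{H}_{\mathcal{R}}$ of a semigroup is the supremum of cardinalities of chains in its poset of $\mathcal{R}$-classes; for $A$ it is computed in the semigroup $A$ itself. *)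

From mathcomp Require Import all_boot.
Set Implicit Arguments. Unset Strict Implicit. Unset Printing Implicit Defensive.

Inductive gen := gx | gy | gz.

(** Free semigroup with zero on {x,y,z}: either the zero, or a nonempty
    word [Word a s] = a followed by the letters of s. *)
Inductive FS := Zero | Word of gen & seq gen.

Definition fmul (u v : FS) : FS :=
  match u, v with
  | Word a s, Word b t => Word a (s ++ b :: t)
  | _, _ => Zero
  end.

Inductive cong (R : FS -> FS -> Prop) : FS -> FS -> Prop :=
  | cong_base u v : R u v -> cong R u v
  | cong_refl u : cong R u u
  | cong_sym u v : cong R u v -> cong R v u
  | cong_trans u v w : cong R u v -> cong R v w -> cong R u w
  | cong_mull w u v : cong R u v -> cong R (fmul w u) (fmul w v)
  | cong_mulr w u v : cong R u v -> cong R (fmul u w) (fmul v w).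

Definition X : FS := Word gx [::].
Definition Y : FS := Word gy [::].
Definition Z : FS := Word gz [::].

Inductive rels (n : nat) : FS -> FS -> Prop :=
  | r_xyz : rels n (Word gx [:: gy; gz]) X
  | r_yzy : rels n (Word gy [:: gz; gy]) Y
  | r_zyz : rels n (Word gz [:: gy; gz]) Z
  | r_xn  : rels n (Word gx (nseq n.-1 gx)) Zero           (* x^n = 0 *)
  | r_y2  : rels n (Word gy [:: gy]) Zero
  | r_z2  : rels n (Word gz [:: gz]) Zero
  | r_xz  : rels n (Word gx [:: gz]) Zero
  | r_yx  : rels n (Word gy [:: gx]) Zero
  | r_zxn1 : rels n (Word gz (nseq n.-1 gx)) Zero.         (* z x^(n-1) = 0 *)

(** Equality in S (elements of S are represented by elements of FS). *)
Definition eqS (n : nat) : FS -> FS -> Prop := cong (rels n).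

Definition S_finite (n : nat) : Prop :=
  exists (k : nat) (f : nat -> FS), forall u, exists i, i < k /\ eqS n u (f i).

(** Green's R-preorder in S:  u S^1 ⊆ v S^1, i.e. u = v or u = v w. *)
Definition leR_S (n : nat) (u v : FS) : Prop :=
  eqS n u v \/ exists w, eqS n u (fmul v w).

Definition inA (n : nat) (u : FS) : Prop :=
  eqS n u X \/ eqS n u Y \/ exists t, eqS n u (fmul t X) \/ eqS n u (fmul t Y).

(** Green's R-preorder computed in the semigroup A itself: u A^1 ⊆ v A^1. *)
Definition leR_A (n : nat) (u v : FS) : Prop :=
  eqS n u v \/ exists w, inA n w /\ eqS n u (fmul v w).

Definition ltR (le : FS -> FS -> Prop) (u v : FS) : Prop := le u v /\ ~ le v u.

Definition R_chain (le : FS -> FS -> Prop) (P : FS -> Prop) (k : nat)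
  (f : nat -> FS) : Prop :=
  (forall i, i < k -> P (f i)) /\ (forall i, i.+1 < k -> ltR le (f i) (f i.+1)).

Definition R_height_eq (le : FS -> FS -> Prop) (P : FS -> Prop) (h : nat) : Prop :=
  (exists f, R_chain le P h f) /\ (forall k f, R_chain le P k f -> k <= h).

(* Every word equals 0 or a normal form  h x^k y^b  with  h in {x, z, yz},
   k < n - 1  and  b in {0, 1}; the normal forms multiply by an explicit rule,
   and evaluating words in this semigroup of normal forms identifies S with it,
   so |S| = 6(n - 1) + 1.  Right multiplication never decreases k.  In S the
   right multipliers y and z move between  h x^k  and  h x^k y, so the R-classes
   are {0} and the pairs {h x^k, h x^k y}, ranked by n - 1 - k, and the chain
   0 < x^(n-1) < ... < x  is of maximal length n.  In A only elements ending in
   x or y are available: y still takes  x^k  down to  x^k y  and  zx  takes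
   x^k y  down to  x^(k+1), but nothing in A leads back from  x^k y  to  x^k,
   so the rank  2(n - 1 - k) - b  strictly decreases and the R-height of A is
   2n - 1. *)

From mathcomp Require Import all_boot zify.
Set Implicit Arguments. Unset Strict Implicit. Unset Printing Implicit Defensive.

Definition word (l : seq gen) : FS := if l is a :: l' then Word a l' else Zero.

Lemma rcons_nseq (T : Type) k (c : T) : rcons (nseq k c) c = nseq k.+1 c.
Proof. by elim: k => //= k ->. Qed.

Lemma cong_infix R s t a l b r L L' : cong R (Word a l) (Word b r) ->
  L = s ++ a :: l ++ t -> L' = s ++ b :: r ++ t -> cong R (word L) (word L').
Proof.
move=> e -> ->; case: s => [|c s]; case: t => [|d t] /=; rewrite ?cats0 //.
- exact (cong_mulr (Word d t) e).
- exact (cong_mull (Word c s) e).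
- exact (cong_mull (Word c s) (cong_mulr (Word d t) e)).
Qed.

Lemma cong_infix0 R s t a l L : cong R (Word a l) Zero ->
  L = s ++ a :: l ++ t -> cong R (word L) Zero.
Proof.
move=> e ->; case: s => [|c s]; case: t => [|d t] /=; rewrite ?cats0 //.
- exact (cong_mulr (Word d t) e).
- exact (cong_mull (Word c s) e).
- exact (cong_mull (Word c s) (cong_mulr (Word d t) e)).
Qed.

Lemma R_height_eq_rank (le : FS -> FS -> Prop) (P : FS -> Prop) (rk : FS -> nat) m f :
  (forall u v, le u v -> rk u <= rk v) ->
  (forall u v, ltR le u v -> rk u < rk v) ->
  (forall u, P u -> rk u <= m) ->
  (forall i, i <= m -> P (f i) /\ rk (f i) = i) ->
  (forall i, i < m -> le (f i) (f i.+1)) ->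
  R_height_eq le P m.+1.
Proof.
move=> rk_le rk_lt rk_max f_rk f_le; split.
  exists f; split=> [i /f_rk [] // | i /ltnSE hi]; split; first exact: f_le.
  by move/rk_le; rewrite (f_rk _ hi).2 (f_rk _ (ltnW hi)).2 ltnn.
move=> k g [gP g_lt]; have rk_ge i : i < k -> i <= rk (g i).
  elim: i => // i IH hi; have := rk_lt _ _ (g_lt i hi); have := IH (ltnW hi); lia.
case: k gP rk_ge {g_lt} => // k gP rk_ge.
by have := rk_ge k (ltnSn k); have := rk_max _ (gP k (ltnSn k)); lia.
Qed.

Inductive lead := Lx | Lz | Lyz.

(* [Nf h k b] is the word  h x^k y^b;  the letter y itself is stored as yzy. *)
Inductive nf := NZero | Nf of lead & nat & bool.

Definition lead_letters (h : lead) : seq gen :=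
  match h with Lx => [:: gx] | Lz => [:: gz] | Lyz => [:: gy; gz] end.

Definition nf_letters (h : lead) (k : nat) (b : bool) : seq gen :=
  lead_letters h ++ nseq k gx ++ nseq b gy.

Definition nf_word (s : nf) : FS := if s is Nf h k b then word (nf_letters h k b) else Zero.

Definition letter (a : gen) : nf :=
  match a with gx => Nf Lx 0 false | gy => Nf Lyz 0 true | gz => Nf Lz 0 false end.

(* The x's gained where  y^b  meets the lead  h  of the right factor: a lead x
   adds one; the leads  yz  (after b = 0) and  z  (after b = 1) are absorbed by
   xyz = x,  zyz = z,  yzy = y;  and  yx, xz, zz, yy  make the product 0. *)
Definition glue (b : bool) (h : lead) : option nat :=
  match b, h with
  | false, Lx => Some 1
  | false, Lyz => Some 0
  | true, Lz => Some 0
  | _, _ => None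
  end.

Definition lead_code (h : lead) : nat := match h with Lx => 0 | Lz => 1 | Lyz => 2 end.

Definition lead_of_code (i : nat) : lead := match i with 0 => Lx | 1 => Lz | _ => Lyz end.

Definition nf_code (s : nf) : nat :=
  if s is Nf h k b then ((b + k.*2) * 3 + lead_code h).+1 else 0.

Definition nf_decode (i : nat) : nf :=
  if i is j.+1 then Nf (lead_of_code (j %% 3)) (j %/ 3)./2 (odd (j %/ 3)) else NZero.

Lemma nf_codeK : cancel nf_code nf_decode.
Proof.
case=> [|h k b] //=; have hc : lead_code h < 3 by case: h.
rewrite modnMDl modn_small // divnMDl // divn_small // addn0.
by rewrite half_bit_double oddD odd_double addbF oddb; case: h hc.
Qed.

Definition xy_word (m : nat) (b : bool) : FS := Word gx (nseq m gx ++ nseq b gy).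

Section Presentation.

Variable n : nat.

Definition mknf (h : lead) (k : nat) (b : bool) : nf :=
  if k < n.-1 then Nf h k b else NZero.

Definition mulnf (s t : nf) : nf :=
  match s, t with
  | Nf h k b, Nf h' k' b' => if glue b h' is Some j then mknf h (k + j + k') b' else NZero
  | _, _ => NZero
  end.

Definition eval (u : FS) : nf :=
  if u is Word a l then foldl (fun s c => mulnf s (letter c)) (letter a) l else NZero.

Definition nf_valid (s : nf) : bool := if s is Nf _ k _ then k < n.-1 else true.

Lemma mulnfA : associative mulnf.
Proof.
case=> [|h k b] [|h' k' b'] [|h'' k'' b''] //=; rewrite /mknf.
  by case: (glue b h') => // j; case: ifP.
case E1: (glue b h') => [j|]; case E2: (glue b' h'') => [j'|] //=;
  do ?[case: ifP => ? /=; rewrite ?E1 ?E2 /mknf]; rewrite ?addnA //; lia.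
Qed.

Lemma mulnf0 s : mulnf s NZero = NZero.
Proof. by case: s. Qed.

Lemma foldl_mulnf s t l :
  foldl (fun s c => mulnf s (letter c)) (mulnf s t) l
  = mulnf s (foldl (fun s c => mulnf s (letter c)) t l).
Proof. by elim: l t => //= c l IH t; rewrite -mulnfA IH. Qed.

Lemma eval_fmul u v : eval (fmul u v) = mulnf (eval u) (eval v).
Proof.
case: u => [|a l] //; case: v => [|c m] /=; first by rewrite mulnf0.
by rewrite foldl_cat /= foldl_mulnf.
Qed.

Lemma mknf_lt h k b : k < n.-1 -> mknf h k b = Nf h k b.
Proof. by rewrite /mknf => ->. Qed.

Lemma mulnf_x h k : mulnf (mknf h k false) (letter gx) = mknf h k.+1 false.
Proof. rewrite /mknf; case: ifP => /= hk; rewrite /mknf ?addn0 ?addn1 //; case: ifP => //; lia. Qed.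

Lemma mulnf_y h k : mulnf (mknf h k false) (letter gy) = mknf h k true.
Proof. by rewrite /mknf; case: ifP => //= hk; rewrite !addn0 mknf_lt. Qed.

Lemma mulnf_z h k : mulnf (mknf h k true) (letter gz) = mknf h k false.
Proof. by rewrite /mknf; case: ifP => //= hk; rewrite !addn0 mknf_lt. Qed.

Lemma foldl_mulnf_xpow h k m :
  foldl (fun s c => mulnf s (letter c)) (mknf h k false) (nseq m gx) = mknf h (k + m) false.
Proof. by elim: m k => [|m IH] k /=; rewrite ?addn0 // mulnf_x IH addSnnS. Qed.

Hypothesis n_ge2 : 2 <= n.

Lemma mknf0 h b : mknf h 0 b = Nf h 0 b.
Proof. by rewrite mknf_lt //; lia. Qed.

Lemma eval_xy_word m b : eval (xy_word m b) = mknf Lx m b.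
Proof.
rewrite /= foldl_cat -mknf0 foldl_mulnf_xpow add0n.
by case: b => //=; rewrite mulnf_y.
Qed.

Lemma eval_rels u v : rels n u v -> eval u = eval v.
Proof.
have h0 : 0 < n.-1 by lia.
case=> /=; rewrite /mknf ?addn0 ?h0 //= /mknf ?addn0 ?h0 //.
all: by rewrite -mknf0 foldl_mulnf_xpow /mknf ltnn.
Qed.

Lemma eval_eqS u v : eqS n u v -> eval u = eval v.
Proof.
elim=> {u v} [u v /eval_rels //|//|u v _ -> //|u v w _ -> _ -> //|w u v _ e|w u v _ e];
  by rewrite !eval_fmul e.
Qed.

Lemma mknf_valid h k b : nf_valid (mknf h k b).
Proof. by rewrite /mknf; case: ifP. Qed.

Lemma mulnf_valid s t : nf_valid (mulnf s t).
Proof. by case: s t => [|h k b] [|h' k' b'] //=; case: glue => // j; apply: mknf_valid. Qed.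

Lemma eval_valid u : nf_valid (eval u).
Proof.
case: u => [|a l] //=; case/lastP: l => [|l c]; last by rewrite foldl_rcons mulnf_valid.
by case: a => /=; lia.
Qed.

Lemma nf_word_mul_x h k b : k < n.-1 ->
  eqS n (word (rcons (nf_letters h k b) gx)) (nf_word (mulnf (Nf h k b) (letter gx))).
Proof.
rewrite /nf_letters => hk; case: b => /=.
  apply: (cong_infix0 (s := lead_letters h ++ nseq k gx) (t := [::]) (cong_base (r_yx n))).
  by rewrite -cats1 -!catA.
rewrite addn0 addn1 /mknf; case: ifP => [hk1 | /negbT hk1].
  by rewrite /nf_word /nf_letters !cats0 -rcons_nseq rcons_cat; apply: cong_refl.
have ek : k.+1 = n.-1 by lia.
case: h.
- apply: (cong_infix0 (s := [::]) (t := [::]) (cong_base (r_xn n))).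
  by rewrite /= cats0 rcons_nseq ek cats0.
- apply: (cong_infix0 (s := [::]) (t := [::]) (cong_base (r_zxn1 n))).
  by rewrite /= cats0 rcons_nseq ek cats0.
- apply: (cong_infix0 (s := [:: gy]) (t := [::]) (cong_base (r_zxn1 n))).
  by rewrite /= cats0 rcons_nseq ek cats0.
Qed.

Lemma nf_word_mul_y h k b : k < n.-1 ->
  eqS n (word (rcons (nf_letters h k b) gy)) (nf_word (mulnf (Nf h k b) (letter gy))).
Proof.
rewrite /nf_letters => hk; case: b => /=.
  apply: (cong_infix0 (s := lead_letters h ++ nseq k gx) (t := [::]) (cong_base (r_y2 n))).
  by rewrite -cats1 -!catA.
by rewrite !addn0 mknf_lt //= cats0 -cats1 -catA; apply: cong_refl.
Qed.

Lemma nf_word_mul_z h k b : k < n.-1 ->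
  eqS n (word (rcons (nf_letters h k b) gz)) (nf_word (mulnf (Nf h k b) (letter gz))).
Proof.
rewrite /nf_letters => hk; case: b => /=; last first.
  case: k hk => [|k] hk; last first.
    apply: (cong_infix0 (s := lead_letters h ++ nseq k gx) (t := [::]) (cong_base (r_xz n))).
    by rewrite cats0 -rcons_nseq -!cats1 -!catA.
  case: h => /=.
  - exact/cong_base/r_xz.
  - exact/cong_base/r_z2.
  - exact (cong_mull Y (cong_base (r_z2 n))).
rewrite !addn0 mknf_lt //=; case: k hk => [|k] hk; last first.
  apply: (cong_infix (s := lead_letters h ++ nseq k gx) (t := [::]) (cong_base (r_xyz n))).
  - by rewrite -rcons_nseq -!cats1 -!catA.
  - by rewrite /nf_letters cats0 -rcons_nseq -!cats1 -!catA.
case: h => /=.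
- exact/cong_base/r_xyz.
- exact/cong_base/r_zyz.
- exact (cong_mulr Z (cong_base (r_yzy n))).
Qed.

Lemma nf_word_mul_letter s c : nf_valid s ->
  eqS n (fmul (nf_word s) (Word c [::])) (nf_word (mulnf s (letter c))).
Proof.
case: s => [_ | h k b /= hk]; first exact: cong_refl.
have -> : fmul (word (nf_letters h k b)) (Word c [::]) = word (rcons (nf_letters h k b) c).
  by case: h; rewrite /= cats1.
by case: c; [apply: nf_word_mul_x | apply: nf_word_mul_y | apply: nf_word_mul_z].
Qed.

Lemma eqS_nf_word_eval u : eqS n u (nf_word (eval u)).
Proof.
case: u => [|a l]; first exact: cong_refl.
elim/last_ind: l => [|l c IH].
  by case: a; [apply: cong_refl | apply/cong_sym/cong_base/r_yzy | apply: cong_refl].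
rewrite /= foldl_rcons -cats1.
exact: cong_trans (cong_mulr (Word c [::]) IH) (nf_word_mul_letter _ (eval_valid _)).
Qed.

Lemma eqS_eval u v : eqS n u v <-> eval u = eval v.
Proof.
split=> [|e]; first exact: eval_eqS.
by apply: cong_trans (eqS_nf_word_eval u) _; rewrite e; apply/cong_sym/eqS_nf_word_eval.
Qed.

Lemma finite_S : S_finite n.
Proof.
exists (6 * n), (fun i => nf_word (nf_decode i)) => u.
exists (nf_code (eval u)); rewrite nf_codeK; split; last exact: eqS_nf_word_eval.
have := eval_valid u; case: (eval u) => [|h k b] /=; first lia.
by case: h; case: b => /=; lia.
Qed.

Lemma leR_S_eval u v w : eval u = mulnf (eval v) (eval w) -> leR_S n u v.
Proof. by move=> e; right; exists w; apply/eqS_eval; rewrite eval_fmul. Qed.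

Lemma leR_A_eval u v w : inA n w -> eval u = mulnf (eval v) (eval w) -> leR_A n u v.
Proof. by move=> Aw e; right; exists w; split=> //; apply/eqS_eval; rewrite eval_fmul. Qed.

Definition rankS (s : nf) : nat := if s is Nf _ k _ then n.-1 - k else 0.

Lemma rankS_mulnf s t : rankS (mulnf s t) <= rankS s.
Proof.
case: s t => [|h k b] [|h' k' b'] //=; case: glue => // j.
by rewrite /mknf; case: ifP => //= _; lia.
Qed.

Lemma rankS_mulnf_eq s t : nf_valid s -> rankS (mulnf s t) = rankS s ->
  s = mulnf s t \/ exists c, s = mulnf (mulnf s t) (letter c).
Proof.
case: s => [|h k b] /= => [_ _|hk]; first by case: t; left.
case: t => [|h' k' b'] /=; first lia.
case: glue => [j|] /=; last lia.
rewrite /mknf; case: ifP => /= hk' e; last lia.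
have -> : k + j + k' = k by lia.
case: b b' => [] []; [left | right; exists gy | right; exists gz | left] => //=.
all: by rewrite !addn0 mknf_lt.
Qed.

Lemma rankS_leR u v : leR_S n u v -> rankS (eval u) <= rankS (eval v).
Proof. by case=> [/eqS_eval -> // | [w /eqS_eval ->]]; rewrite eval_fmul rankS_mulnf. Qed.

Lemma rankS_ltR u v : ltR (leR_S n) u v -> rankS (eval u) < rankS (eval v).
Proof.
case=> [[/eqS_eval e | [w /eqS_eval e]] not_vu]; first by case: not_vu; left; apply/eqS_eval.
rewrite eval_fmul in e; rewrite ltn_neqAle e rankS_mulnf andbT.
apply/negP => /eqP/(rankS_mulnf_eq (eval_valid v)); rewrite -e.
case=> [vu | [c vu]]; apply: not_vu; first by left; apply/eqS_eval.
exact: (leR_S_eval (w := Word c [::])).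
Qed.

Definition inA_nf (s : nf) : bool :=
  if s is Nf h k b then if h is Lx then true else (0 < k) || b else true.

Lemma inA_nf_mulnf s t : inA_nf t -> inA_nf (mulnf s t).
Proof.
case: s t => [|h k b] [|h' k' b'] //= tA; case: b h' tA => [] [] //= tA.
all: rewrite /mknf; case: ifP => //= _; case: h => //; move: tA; lia.
Qed.

Lemma inA_nf_eval u : inA n u -> inA_nf (eval u).
Proof. by case=> [|[|[t []]]] /eqS_eval ->; rewrite ?eval_fmul ?inA_nf_mulnf. Qed.

Definition rankA (s : nf) : nat := if s is Nf _ k b then (n.-1 - k).*2 - b else 0.

Lemma rankA_mulnf s t :
  nf_valid s -> inA_nf t -> mulnf s t = s \/ rankA (mulnf s t) < rankA s.
Proof.
case: s => [|h k b] /= => [_ _|hk]; first by left.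
case: t => [|h' k' b'] /= tA; first by right; lia.
case: b h' tA => [] [] //= tA; rewrite /mknf; try (by right; lia);
  case: ifP => /= _; try (by right; lia).
(* only  h x^k y . z y  fixes the rank, and it is  h x^k y  again *)
case: (posnP k') tA => [-> /= -> | ?]; last by right; lia.
by left; rewrite !addn0.
Qed.

Lemma rankA_leR u v : leR_A n u v -> eval u = eval v \/ rankA (eval u) < rankA (eval v).
Proof.
case=> [/eqS_eval -> | [w [/inA_nf_eval wA /eqS_eval ->]]]; first by left.
by rewrite eval_fmul; case: (rankA_mulnf (eval_valid v) wA) => [->|]; [left | right].
Qed.

Lemma rankA_le u v : leR_A n u v -> rankA (eval u) <= rankA (eval v).
Proof. by case/rankA_leR => [-> // | /ltnW]. Qed.

Lemma rankA_ltR u v : ltR (leR_A n) u v -> rankA (eval u) < rankA (eval v).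
Proof. by case=> /rankA_leR [e | //] []; left; apply/eqS_eval. Qed.

Lemma rankS_mknf h m b : rankS (mknf h m b) = n.-1 - m.
Proof. by rewrite /mknf; case: ifP => //=; lia. Qed.

Lemma rankA_mknf h m b : rankA (mknf h m b) = (n.-1 - m).*2 - b.
Proof. by rewrite /mknf; case: ifP => //=; lia. Qed.

Lemma inA_xy_word m b : inA n (xy_word m b).
Proof.
case: b.
  right; right; exists (xy_word m false); right.
  by rewrite /xy_word [fmul _ _]/= cats0; apply: cong_refl.
case: m => [|m]; first by left; apply: cong_refl.
right; right; exists (xy_word m false); left.
by rewrite /xy_word [fmul _ _]/= !cats0 cats1 rcons_nseq; apply: cong_refl.
Qed.

Lemma R_height_S : R_height_eq (leR_S n) (fun _ => True) n.
Proof.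
rewrite -[X in R_height_eq _ _ X](prednK (ltnW n_ge2)).
apply: (R_height_eq_rank (rk := fun u => rankS (eval u)) (f := fun i => xy_word (n.-1 - i) false)).
- exact: rankS_leR.
- exact: rankS_ltR.
- by move=> u _; case: (eval u) => //= *; lia.
- by move=> i hi; rewrite eval_xy_word rankS_mknf; split=> //; lia.
- move=> i hi; apply: (leR_S_eval (w := X)).
  by rewrite !eval_xy_word mulnf_x; congr mknf; lia.
Qed.

Lemma R_height_A : R_height_eq (leR_A n) (inA n) (2 * n - 1).
Proof.
have -> : 2 * n - 1 = (n.-1).*2.+1 by lia.
apply: (R_height_eq_rank (rk := fun u => rankA (eval u))
                         (f := fun i => xy_word (n.-1 - uphalf i) (odd i))).
- exact: rankA_le.
- exact: rankA_ltR.
- by move=> u _; case: (eval u) => //= *; lia.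
- move=> i hi; split; first exact: inA_xy_word.
  by rewrite eval_xy_word rankA_mknf; have := uphalfK i; lia.
move=> i hi; have := odd_double_half i; rewrite uphalf_half /=.
case: (odd i) => /= ei.
- apply: (leR_A_eval (w := Y)); first by right; left; apply: cong_refl.
  by rewrite !eval_xy_word mulnf_y add1n.
- apply: (leR_A_eval (w := fmul Z X)); first by right; right; exists Z; left; apply: cong_refl.
  rewrite !eval_xy_word eval_fmul mulnfA mulnf_z mulnf_x add0n; congr mknf; lia.
Qed.

End Presentation.

Unset Implicit Arguments.

Theorem theorem4p10 (n : nat) (hn : 2 <= n) :
  S_finite n /\
  R_height_eq (leR_S n) (fun _ => True) n /\
  R_height_eq (leR_A n) (inA n) (2 * n - 1).
Proof. by split; [exact: finite_S | split; [exact: R_height_S | exact: R_height_A]]. Qed.
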